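(* Let $n\in\mathbb Z_{>0}$ and let $B$ be a (closed, filled) convex $n$-sided polygon in $D$ with vertices $A_1,\ldots,A_n$ in counterclockwise order; set $A_{n+1}=A_1$. For $1\leq i\leq n$ let $u_i,v_i\in S^1$ be the intersections of the line $A_iA_{i+1}$ with $S^1$, with $u_i$ closer to $A_i$ than to $A_{i+1}$; set $u_{n+1}=u_1$. Then for $1\leq i\leq n$: (1) if $v\in arc[u_i,u_{i+1})$, then $\psi_B(v)=\psi_{A_{i+1}}(v)$; (2) if $v\in arc(u_i,u_{i+1})$, then $\psi_B'(v)=\dfrac{|A_{i+1}\psi_{A_{i+1}}(v)|}{|vA_{i+1}|}$; (3) $\psi_{B+}'(u_i)=\dfrac{|A_{i+1}\psi_{A_{i+1}}(u_i)|}{|u_iA_{i+1}|}$ and $\psi_{B-}'(u_i)=\dfrac{|A_i\psi_{A_i}(u_i)|}{|u_iA_i|}$.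
   Context: $D$ is the open unit disk in $\mathbb R^2$, $S^1$ its boundary circle identified with $\mathbb R/\mathbb Z$ via the counterclockwise normalized angle, $\pi:\mathbb R\to S^1$ the projection. For a closed convex $U\subset D$ and $v\in S^1$, $\psi_U(v)$ is the point $w\in S^1\setminus\{v\}$ such that the line $vw$ meets $U$ and $U$ lies in the closed half-plane to the left of the directed line from $v$ to $w$; for a point $P\in D$, $\psi_P(v)$ is the second intersection point of the line $vP$ with $S^1$. For a homeomorphism $g$ of $S^1$ with lift $\overline g$ ($\overline g(0)\in[0,1)$) and $x\in S^1$, $g'(x)$, $g'_+(x)$, $g'_-(x)$ denote $\overline g'(u)$, the right derivative $\overline g'_+(u)$, the left derivative $\overline g'_-(u)$ for $u\in\pi^{-1}(x)$. $|XY|$ is Euclidean distance. For $w_1,w_2\in S^1$, $arc[w_1,w_2)$ is the counterclockwise arc from $w_1$ to $w_2$ including $w_1$ and excluding $w_2$; $arc(w_1,w_2)$ excludes both endpoints. *)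

From Stdlib Require Import Reals Lra ClassicalEpsilon.
From Coquelicot Require Import Coquelicot.
Open Scope R_scope.

Definition pt := (R * R)%type.
Definition vsub (a b : pt) : pt := (fst a - fst b, snd a - snd b).
Definition cross (a b : pt) : R := fst a * snd b - snd a * fst b.
Definition dotp (a b : pt) : R := fst a * fst b + snd a * snd b.
Definition edist (P Q : pt) : R := sqrt ((fst P - fst Q) ^ 2 + (snd P - snd Q) ^ 2).

Definition in_D (P : pt) : Prop := fst P ^ 2 + snd P ^ 2 < 1.
Definition on_S1 (P : pt) : Prop := fst P ^ 2 + snd P ^ 2 = 1.

(** The projection pi : R -> S^1 = R/Z, via the counterclockwise normalized angle. *)
Definition piS1 (t : R) : pt := (cos (2 * PI * t), sin (2 * PI * t)).

Definition left_closed (v w P : pt) : Prop := cross (vsub w v) (vsub P v) >= 0.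
Definition on_line (v w P : pt) : Prop := cross (vsub w v) (vsub P v) = 0.

Definition psi_rel (U : pt -> Prop) (v w : pt) : Prop :=
  on_S1 w /\ w <> v /\ (exists P, U P /\ on_line v w P) /\
  (forall P, U P -> left_closed v w P).
Definition psiU (U : pt -> Prop) (v : pt) : pt :=
  epsilon (inhabits ((0, 0) : pt)) (fun w => psi_rel U v w).

(** psi_P(v) for a point P ∈ D, v ∈ S^1: the second intersection of the line vP with S^1,
    namely v + s (P - v) with s = -2 <v, P - v> / |P - v|^2. *)
Definition psi_pt (P v : pt) : pt :=
  let d := vsub P v in
  let s := - 2 * dotp v d / dotp d d in
  (fst v + s * fst d, snd v + s * snd d).

Definition is_lift (g : pt -> pt) (gbar : R -> R) : Prop :=
  continuity gbar /\ 0 <= gbar 0 < 1 /\ (forall t, piS1 (gbar t) = g (piS1 t)).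

Definition is_right_derive (f : R -> R) (x l : R) : Prop :=
  filterlim (fun h => (f (x + h) - f x) / h) (at_right 0) (locally l).
Definition is_left_derive (f : R -> R) (x l : R) : Prop :=
  filterlim (fun h => (f (x + h) - f x) / h) (at_left 0) (locally l).

Definition arc_co (w1 w2 v : pt) : Prop :=
  exists a b t, piS1 a = w1 /\ piS1 b = w2 /\ a < b <= a + 1 /\
                piS1 t = v /\ a <= t < b.
Definition arc_oo (w1 w2 v : pt) : Prop :=
  exists a b t, piS1 a = w1 /\ piS1 b = w2 /\ a < b <= a + 1 /\
                piS1 t = v /\ a < t < b.

(** Polygon data: vertices A 0, ..., A (n-1) (0-based), cyclic successor index. *)
Definition nxt (n i : nat) : nat := ((S i) mod n)%nat.

Definition convex_ccw (n : nat) (A : nat -> pt) : Prop :=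
  forall i j, (i < n)%nat -> (j < n)%nat -> j <> i -> j <> nxt n i ->
    cross (vsub (A (nxt n i)) (A i)) (vsub (A j) (A i)) > 0.

Definition polygon (n : nat) (A : nat -> pt) (P : pt) : Prop :=
  exists lam : nat -> R,
    (forall j, (j < n)%nat -> 0 <= lam j) /\
    sum_f_R0 lam (n - 1) = 1 /\
    P = (sum_f_R0 (fun j => lam j * fst (A j)) (n - 1),
         sum_f_R0 (fun j => lam j * snd (A j)) (n - 1)).

Definition is_u (n : nat) (A : nat -> pt) (i : nat) (w : pt) : Prop :=
  on_S1 w /\ on_line (A i) (A (nxt n i)) w /\ edist w (A i) < edist w (A (nxt n i)).

From Stdlib Require Import Reals Lra Lia ClassicalEpsilon FunctionalExtensionality Nsatz.
From Coquelicot Require Import Coquelicot.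
Open Scope R_scope.

(* For [v] on the circle and [P] in the disk put [tau_P(v) = (v x P) / (1 - v.P)].  The sign
   of [(P - v) x (Q - v)] is the sign of [tau_P(v) - tau_Q(v)], so [psi_B(v) = psi_P(v)] for the
   vertex [P] maximising [tau_P(v)], and [t + 1/2 - atan (max_k tau_{A_k}(pi t)) / PI] is the
   (unique) lift of [psi_B].  For [v] in [arc[u_i, u_{i+1})] both neighbours of [A_{i+1}] lie to
   the left of the line from [v] through [A_{i+1}], so by convexity the maximiser is [A_{i+1}].
   On the open arc these inequalities are strict, hence persist near [v], and there the lift
   is the smooth lift of [psi_{A_{i+1}}], whose derivative [(1 - |P|^2) / |P - v|^2] equals
   [|P psi_P(v)| / |v P|].  At [u_i] the same holds to the right with [A_{i+1}] and to the left
   with [A_i]. *)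

(** * Vectors and chords *)

Ltac unfold_pt :=
  unfold psi_pt, edist, left_closed, on_line, on_S1, in_D, dotp, vsub, cross in *;
  cbn [fst snd] in *.

Lemma dist2_pos (P Q : pt) : P <> Q -> dotp (vsub P Q) (vsub P Q) > 0.
Proof.
  destruct P as [x y], Q as [a b]; unfold_pt; intros Hne.
  pose proof (Rle_0_sqr (x - a)); pose proof (Rle_0_sqr (y - b)); unfold Rsqr in *.
  destruct (Req_dec x a) as [-> | Hx].
  - assert (y <> b) by (intros ->; auto).
    assert (0 < (y - b) * (y - b)) by (apply Rsqr_pos_lt; lra). lra.
  - assert (0 < (x - a) * (x - a)) by (apply Rsqr_pos_lt; lra). lra.
Qed.

Lemma dotp_lt_1 (v P : pt) : on_S1 v -> in_D P -> dotp v P < 1.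
Proof.
  destruct v as [a b], P as [x y]; unfold_pt; intros.
  pose proof (pow2_ge_0 (a - x)); pose proof (pow2_ge_0 (b - y)). nra.
Qed.

Lemma S1_D_neq (v P : pt) : on_S1 v -> in_D P -> P <> v.
Proof. intros Hv HP ->. unfold on_S1, in_D in *. lra. Qed.

Lemma chord_dotp (x y : pt) : on_S1 x -> on_S1 y ->
  2 * dotp x (vsub y x) = - dotp (vsub y x) (vsub y x).
Proof. destruct x, y; unfold_pt; intros. nra. Qed.

Lemma chord_dotp_neg (x y : pt) : on_S1 x -> on_S1 y -> y <> x -> dotp x (vsub y x) < 0.
Proof.
  intros Hx Hy Hne. pose proof (chord_dotp x y Hx Hy). pose proof (dist2_pos y x Hne). lra.
Qed.

Lemma dotp_cross_sq (v P : pt) : on_S1 v ->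
  (1 - dotp v P) ^ 2 + cross v P ^ 2 = dotp (vsub P v) (vsub P v).
Proof. destruct v, P; unfold_pt; simpl in *. intros Hv. nsatz. Qed.

Lemma cross_anti (a b : pt) : cross a b = - cross b a.
Proof. unfold cross. ring. Qed.

Lemma cross_eq0_scal (a b : pt) : dotp a a > 0 -> cross a b = 0 ->
  b = (dotp a b / dotp a a * fst a, dotp a b / dotp a a * snd a).
Proof.
  destruct a as [p q], b as [r s]; unfold_pt; intros Ha Hc.
  f_equal; field_simplify_eq; try lra.
  - replace (p * q * s) with (r * q ^ 2 + q * (p * s - q * r)) by ring. rewrite Hc. ring.
  - replace (p * r * q) with (s * p ^ 2 - p * (p * s - q * r)) by ring. rewrite Hc. ring.
Qed.

Lemma dotp_cross_identity (x a b c : pt) :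
  dotp x a * cross b c = dotp x b * cross a c + dotp x c * cross b a.
Proof. unfold dotp, cross. ring. Qed.

(* Cramer's rule [(a x b) c = (c x b) a + (a x c) b], crossed with [w]. *)
Lemma cross_cramer (w a b c : pt) :
  cross a b * cross w c = cross c b * cross w a + cross a c * cross w b.
Proof. unfold cross. ring. Qed.

Lemma half_plane_cross_trans (x a b c : pt) :
  dotp x a < 0 -> dotp x b < 0 -> dotp x c < 0 ->
  cross a b > 0 -> cross b c > 0 -> cross a c > 0.
Proof.
  intros Ha Hb Hc Hab Hbc. pose proof (dotp_cross_identity x b a c) as I.
  assert (dotp x a * cross b c < 0) by nra. assert (dotp x c * cross a b < 0) by nra.
  nra.
Qed.

Lemma chord_collinear_eq (v w1 w2 : pt) : on_S1 v -> on_S1 w1 -> on_S1 w2 ->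
  w1 <> v -> w2 <> v -> cross (vsub w1 v) (vsub w2 v) = 0 -> w1 = w2.
Proof.
  intros Hv H1 H2 N1 N2 Hc.
  pose proof (dist2_pos _ _ N1) as P1.
  pose proof (cross_eq0_scal _ _ P1 Hc) as E.
  pose proof (chord_dotp _ _ Hv H1) as C1. pose proof (chord_dotp _ _ Hv H2) as C2.
  rewrite E in C2.
  set (c := dotp (vsub w1 v) (vsub w2 v) / dotp (vsub w1 v) (vsub w1 v)) in E, C2.
  clearbody c. destruct v as [a b], w1 as [p q], w2 as [r s]. unfold_pt.
  injection E as Er Es.
  (* [w2 - v = c (w1 - v)], and both chords satisfy [2 v.d + |d|^2 = 0] *)
  pose proof (f_equal (Rmult c) C1) as C1c.
  assert (Hcc : c * (c - 1) * ((p - a) * (p - a) + (q - b) * (q - b)) = 0) by lra.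
  assert (c <> 0) by (intros ->; apply N2; f_equal; lra).
  assert (c = 1) as -> by (apply Rmult_integral in Hcc as [Hcc|]; [|lra];
                           apply Rmult_integral in Hcc as [|]; lra).
  f_equal; lra.
Qed.

Fixpoint Rmax_upto (f : nat -> R) (m : nat) : R :=
  match m with O => f O | S m' => Rmax (Rmax_upto f m') (f (S m')) end.

Lemma Rmax_upto_ge (f : nat -> R) m j : (j <= m)%nat -> f j <= Rmax_upto f m.
Proof.
  induction m as [|m IH]; intros Hj; simpl.
  - replace j with 0%nat by lia. lra.
  - destruct (Nat.eq_dec j (S m)) as [->|]; [apply Rmax_r|].
    eapply Rle_trans; [apply IH; lia | apply Rmax_l].
Qed.

Lemma Rmax_upto_attained (f : nat -> R) m : exists j, (j <= m)%nat /\ Rmax_upto f m = f j.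
Proof.
  induction m as [|m [j [Hj E]]]; simpl; [exists 0%nat; auto|].
  unfold Rmax. destruct (Rle_dec (Rmax_upto f m) (f (S m))).
  - exists (S m); auto.
  - exists j; split; [lia | auto].
Qed.

Lemma Rmax_upto_eq (f : nat -> R) m k : (k <= m)%nat ->
  (forall j, (j <= m)%nat -> f j <= f k) -> Rmax_upto f m = f k.
Proof.
  intros Hk H. destruct (Rmax_upto_attained f m) as [j [Hj E]].
  pose proof (Rmax_upto_ge f m k Hk). pose proof (H j Hj). lra.
Qed.

Lemma Rmax_upto_continuous (f : nat -> R -> R) m t :
  (forall j, (j <= m)%nat -> continuous (f j) t) ->
  continuous (fun s => Rmax_upto (fun j => f j s) m) t.
Proof.
  induction m as [|m IH]; intros H; simpl; [apply H; lia|].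
  set (g := fun s => Rmax_upto (fun j => f j s) m).
  assert (Cg : continuous g t) by (apply IH; intros; apply H; lia).
  assert (Cf : continuous (f (S m)) t) by (apply H; lia).
  apply (continuous_ext (fun s => (g s + f (S m) s + Rabs (g s - f (S m) s)) / 2)).
  { intros s. cbn [Rmax_upto]. change (Rmax_upto (fun j => f j s) m) with (g s).
    unfold Rmax, Rabs.
    destruct (Rle_dec (g s) (f (S m) s)), (Rcase_abs (g s - f (S m) s)); lra. }
  apply (continuous_scal_l (fun s => g s + f (S m) s + Rabs (g s - f (S m) s)) (/ 2)).
  apply (continuous_plus (fun s => g s + f (S m) s)).
  - apply (continuous_plus g); auto.
  - apply continuous_Rabs_comp, (continuous_minus g); auto.
Qed.

(** * The polygon and its supporting chords *)

Lemma sum_f_R0_affine (lam x y : nat -> R) (al be ga : R) m :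
  sum_f_R0 (fun j => lam j * (al * x j + be * y j + ga)) m =
  al * sum_f_R0 (fun j => lam j * x j) m + be * sum_f_R0 (fun j => lam j * y j) m
  + ga * sum_f_R0 lam m.
Proof. induction m as [|m IH]; simpl; [|rewrite IH]; ring. Qed.

Lemma sum_f_R0_comb_nonneg (lam c : nat -> R) m :
  (forall j, (j <= m)%nat -> 0 <= lam j /\ 0 <= c j) ->
  0 <= sum_f_R0 (fun j => lam j * c j) m.
Proof.
  induction m as [|m IH]; intros H; simpl.
  - destruct (H 0%nat) as [H1 H2]; [lia|]. nra.
  - assert (0 <= sum_f_R0 (fun j => lam j * c j) m) by (apply IH; intros; apply H; lia).
    destruct (H (S m)) as [H1 H2]; [lia|]. nra.
Qed.

Lemma sum_f_R0_indicator k (f : nat -> R) m :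
  sum_f_R0 (fun j => (if Nat.eq_dec j k then 1 else 0) * f j) m =
  if Nat.leb k m then f k else 0.
Proof.
  induction m as [|m IH]; cbn [sum_f_R0].
  - destruct (Nat.eq_dec 0 k) as [<-|Hk]; [simpl; ring|]. destruct k; [lia|simpl; ring].
  - rewrite IH. destruct (Nat.eq_dec (S m) k) as [<-|Hk].
    + rewrite Nat.leb_refl. replace (Nat.leb (S m) m) with false by (symmetry; apply Nat.leb_gt; lia).
      ring.
    + destruct (Nat.leb_spec k m), (Nat.leb_spec k (S m)); try lia; ring.
Qed.

Lemma polygon_affine_nonneg (n : nat) (A : nat -> pt) (al be ga : R) (Q : pt) :
  (1 <= n)%nat -> (forall j, (j < n)%nat -> 0 <= al * fst (A j) + be * snd (A j) + ga) ->
  polygon n A Q -> 0 <= al * fst Q + be * snd Q + ga.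
Proof.
  intros Hn H [lam [H1 [H2 ->]]]. cbn [fst snd].
  rewrite <- (Rmult_1_r ga), <- H2, <- sum_f_R0_affine.
  apply sum_f_R0_comb_nonneg. intros j Hj. split; [apply H1 | apply H]; lia.
Qed.

Lemma polygon_vertex (n : nat) (A : nat -> pt) k : (k < n)%nat -> polygon n A (A k).
Proof.
  intros Hk. exists (fun j => if Nat.eq_dec j k then 1 else 0).
  assert (Hkn : Nat.leb k (n - 1) = true) by (apply Nat.leb_le; lia).
  split; [|split].
  - intros j _. destruct (Nat.eq_dec j k); lra.
  - rewrite (sum_eq _ (fun j => (if Nat.eq_dec j k then 1 else 0) * 1)) by (intros; ring).
    rewrite sum_f_R0_indicator, Hkn. reflexivity.
  - rewrite !sum_f_R0_indicator, Hkn. destruct (A k); reflexivity.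
Qed.

Lemma polygon_dotp_lt_1 (n : nat) (A : nat -> pt) (v Q : pt) : (1 <= n)%nat ->
  (forall j, (j < n)%nat -> in_D (A j)) -> on_S1 v -> polygon n A Q -> dotp v Q < 1.
Proof.
  intros Hn HD Hv HQ.
  set (M := Rmax_upto (fun j => dotp v (A j)) (n - 1)).
  assert (HM : M < 1).
  { destruct (Rmax_upto_attained (fun j => dotp v (A j)) (n - 1)) as [j [Hj E]].
    unfold M. rewrite E. apply dotp_lt_1; auto. apply HD. lia. }
  assert (0 <= - fst v * fst Q + - snd v * snd Q + M).
  { apply (polygon_affine_nonneg n A); auto. intros j Hj.
    pose proof (Rmax_upto_ge (fun j => dotp v (A j)) (n - 1) j ltac:(lia)) as Hj'.
    fold M in Hj'. unfold dotp in Hj'. lra. }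
  unfold dotp. lra.
Qed.

Definition psi_scale (P v : pt) : R :=
  -2 * dotp v (vsub P v) / dotp (vsub P v) (vsub P v).

Lemma psi_pt_eq (P v : pt) :
  psi_pt P v = (fst v + psi_scale P v * fst (vsub P v), snd v + psi_scale P v * snd (vsub P v)).
Proof. reflexivity. Qed.

Lemma psi_scale_gt_1 (P v : pt) : on_S1 v -> in_D P -> psi_scale P v > 1.
Proof.
  intros Hv HP. pose proof (dist2_pos P v (S1_D_neq v P Hv HP)) as Hd.
  pose proof (dotp_lt_1 v P Hv HP). unfold psi_scale.
  apply Rlt_gt, (Rmult_lt_reg_r (dotp (vsub P v) (vsub P v))); [lra|].
  unfold Rdiv. rewrite Rmult_assoc, Rinv_l by lra.
  destruct v as [a b], P as [x y]; unfold_pt. nra.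
Qed.

Lemma psi_pt_on_S1 (P v : pt) : on_S1 v -> in_D P -> on_S1 (psi_pt P v).
Proof.
  intros Hv HP. pose proof (dist2_pos P v (S1_D_neq v P Hv HP)) as Hd.
  assert (Hs : psi_scale P v * dotp (vsub P v) (vsub P v) = -2 * dotp v (vsub P v))
    by (unfold psi_scale; field; lra).
  rewrite psi_pt_eq. set (s := psi_scale P v) in *. clearbody s.
  destruct v as [a b], P as [x y]; unfold_pt. nra.
Qed.

Lemma psi_pt_sub (P v : pt) :
  vsub (psi_pt P v) v = (psi_scale P v * fst (vsub P v), psi_scale P v * snd (vsub P v)).
Proof. rewrite psi_pt_eq. unfold vsub. cbn [fst snd]. f_equal; ring. Qed.

Lemma psi_rel_polygon_vertex (n : nat) (A : nat -> pt) (v : pt) (k : nat) :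
  (1 <= n)%nat -> (forall j, (j < n)%nat -> in_D (A j)) -> on_S1 v -> (k < n)%nat ->
  (forall j, (j < n)%nat -> left_closed v (A k) (A j)) ->
  psi_rel (polygon n A) v (psi_pt (A k) v).
Proof.
  intros Hn HD Hv Hk Hc. pose proof (HD k Hk) as HP.
  pose proof (psi_scale_gt_1 _ _ Hv HP) as Hs.
  pose proof (dist2_pos _ _ (S1_D_neq v (A k) Hv HP)) as Hd.
  split; [apply psi_pt_on_S1; auto|]. split; [|split].
  - intros E. pose proof (psi_pt_sub (A k) v) as Ew. rewrite E in Ew.
    set (s := psi_scale (A k) v) in *. clearbody s.
    destruct v as [a b]. destruct (A k) as [x y]. unfold_pt. injection Ew as E1 E2.
    assert (Hx : x - a = 0) by (apply (Rmult_eq_reg_l s); lra).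
    assert (Hy : y - b = 0) by (apply (Rmult_eq_reg_l s); lra).
    rewrite Hx, Hy in Hd. lra.
  - exists (A k). split; [apply polygon_vertex; auto|].
    unfold on_line. rewrite psi_pt_sub. unfold cross. cbn [fst snd]. ring.
  - intros Q HQ. unfold left_closed. apply Rle_ge.
    replace (cross (vsub (psi_pt (A k) v) v) (vsub Q v)) with
      (psi_scale (A k) v * ((snd v - snd (A k)) * fst Q + (fst (A k) - fst v) * snd Q
                           + (snd (A k) * fst v - fst (A k) * snd v)))
      by (rewrite psi_pt_sub; unfold vsub, cross; cbn [fst snd]; ring).
    apply Rmult_le_pos; [lra|]. apply (polygon_affine_nonneg n A); auto.
    intros j Hj. pose proof (Hc j Hj) as Hj'. unfold_pt. lra.
Qed.

Lemma collinear_chord_cross_le (v d e f : pt) :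
  dotp v d < 0 -> dotp v e < 0 -> cross d e = 0 -> cross f e >= 0 -> cross d f <= 0.
Proof.
  intros Hd He Hde Hfe. pose proof (dotp_cross_identity v e d f) as I.
  rewrite Hde, Rmult_0_r, Rplus_0_r, (cross_anti e f) in I. nra.
Qed.

Lemma psi_rel_polygon_unique (n : nat) (A : nat -> pt) (v w1 w2 : pt) :
  (1 <= n)%nat -> (forall j, (j < n)%nat -> in_D (A j)) -> on_S1 v ->
  psi_rel (polygon n A) v w1 -> psi_rel (polygon n A) v w2 -> w1 = w2.
Proof.
  intros Hn HD Hv [S1 [N1 [[Q1 [HQ1 L1]] K1]]] [S2 [N2 [[Q2 [HQ2 L2]] K2]]].
  assert (HQ : forall Q, polygon n A Q -> dotp v (vsub Q v) < 0).
  { intros Q HQ. pose proof (polygon_dotp_lt_1 n A v Q Hn HD Hv HQ).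
    destruct v, Q; unfold_pt. lra. }
  pose proof (chord_dotp_neg v w1 Hv S1 N1). pose proof (chord_dotp_neg v w2 Hv S2 N2).
  (* each chord has the polygon point of the other one on its left, which forces collinearity *)
  apply (chord_collinear_eq v); auto. apply Rle_antisym.
  - apply (collinear_chord_cross_le v _ (vsub Q1 v)); auto. apply K2; auto.
  - rewrite cross_anti. apply Ropp_0_ge_le_contravar, Rle_ge.
    apply (collinear_chord_cross_le v _ (vsub Q2 v)); auto. apply K1; auto.
Qed.

Lemma psiU_polygon_eq (n : nat) (A : nat -> pt) (v w : pt) :
  (1 <= n)%nat -> (forall j, (j < n)%nat -> in_D (A j)) -> on_S1 v ->
  psi_rel (polygon n A) v w -> psiU (polygon n A) v = w.
Proof.
  intros Hn HD Hv Hw. unfold psiU.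
  pose proof (epsilon_spec (inhabits ((0, 0) : pt)) (psi_rel (polygon n A) v) (ex_intro _ w Hw)).
  eapply psi_rel_polygon_unique; eauto.
Qed.

(** * Lifts *)

Definition chord_tan (P v : pt) : R := cross v P / (1 - dotp v P).

Lemma cross_chord_tan (v P Q : pt) : on_S1 v -> in_D P -> in_D Q ->
  cross (vsub P v) (vsub Q v) =
  (1 - dotp v P) * (1 - dotp v Q) * (chord_tan P v - chord_tan Q v).
Proof.
  intros Hv HP HQ. pose proof (dotp_lt_1 _ _ Hv HP). pose proof (dotp_lt_1 _ _ Hv HQ).
  assert (EP : chord_tan P v * (1 - dotp v P) = cross v P) by (unfold chord_tan; field; lra).
  assert (EQ : chord_tan Q v * (1 - dotp v Q) = cross v Q) by (unfold chord_tan; field; lra).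
  replace ((1 - dotp v P) * (1 - dotp v Q) * (chord_tan P v - chord_tan Q v)) with
    ((1 - dotp v Q) * (chord_tan P v * (1 - dotp v P))
     - (1 - dotp v P) * (chord_tan Q v * (1 - dotp v Q))) by ring.
  rewrite EP, EQ. clear EP EQ.
  destruct v as [a b], P as [x1 y1], Q as [x2 y2]. unfold_pt. simpl in *. clear - Hv. nsatz.
Qed.

Lemma left_closed_iff_chord_tan (v P Q : pt) : on_S1 v -> in_D P -> in_D Q ->
  left_closed v P Q <-> chord_tan Q v <= chord_tan P v.
Proof.
  intros Hv HP HQ. unfold left_closed. rewrite cross_chord_tan by auto.
  pose proof (dotp_lt_1 _ _ Hv HP). pose proof (dotp_lt_1 _ _ Hv HQ).
  assert (0 < (1 - dotp v P) * (1 - dotp v Q)) by (apply Rmult_lt_0_compat; lra).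
  split; intros H'.
  - apply Rnot_lt_le. intros Hlt. nra.
  - apply Rle_ge, Rmult_le_pos; lra.
Qed.

Lemma psiU_polygon_vertex (n : nat) (A : nat -> pt) (v : pt) (k : nat) :
  (1 <= n)%nat -> (forall j, (j < n)%nat -> in_D (A j)) -> on_S1 v -> (k < n)%nat ->
  (forall j, (j < n)%nat -> left_closed v (A k) (A j)) ->
  psiU (polygon n A) v = psi_pt (A k) v.
Proof. intros. apply psiU_polygon_eq, psi_rel_polygon_vertex; auto. Qed.

Lemma piS1_on_S1 (t : R) : on_S1 (piS1 t).
Proof.
  unfold piS1, on_S1. cbn [fst snd]. pose proof (sin2_cos2 (2 * PI * t)). unfold Rsqr in *. lra.
Qed.

(* [atan (chord_tan P v)] is the angle at [v] from the chord towards [P] to the radius, so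
   the chord subtends the central angle [PI - 2 atan (chord_tan P v)]. *)
Definition chord_lift (P : pt) (t : R) : R :=
  t + / 2 - atan (chord_tan P (piS1 t)) / PI.

Lemma cos_sin_2atan (r : R) :
  cos (2 * atan r) = (1 - r ^ 2) / (1 + r ^ 2) /\ sin (2 * atan r) = 2 * r / (1 + r ^ 2).
Proof.
  pose proof (Rle_0_sqr r). unfold Rsqr in *.
  assert (Hs : 0 < sqrt (1 + r²)) by (apply sqrt_lt_R0; unfold Rsqr; lra).
  assert (Hss : sqrt (1 + r²) ^ 2 = 1 + r ^ 2) by (rewrite pow2_sqrt; unfold Rsqr; [ring|lra]).
  rewrite cos_2a_sin, sin_2a, sin_atan, cos_atan.
  split; field_simplify_eq; try rewrite Hss; try field; lra.
Qed.

Lemma piS1_chord_lift (P : pt) (t : R) : in_D P ->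
  piS1 (chord_lift P t) = psi_pt P (piS1 t).
Proof.
  intros HP. pose proof (piS1_on_S1 t) as Hv. pose proof (dotp_lt_1 _ _ Hv HP) as Hq.
  pose proof (dist2_pos _ _ (S1_D_neq _ _ Hv HP)) as Hd.
  unfold chord_lift. set (r := chord_tan P (piS1 t)).
  destruct (cos_sin_2atan r) as [Hc2 Hs2].
  unfold piS1 at 1.
  replace (2 * PI * (t + / 2 - atan r / PI)) with (2 * PI * t + PI - 2 * atan r)
    by (field; apply PI_neq0).
  rewrite cos_minus, sin_minus, cos_plus, sin_plus, cos_PI, sin_PI, Hc2, Hs2.
  pose proof (dotp_cross_sq (piS1 t) P Hv) as HqD.
  unfold r, chord_tan. rewrite psi_pt_eq. unfold psi_scale.
  unfold piS1 in *. set (C := cos (2 * PI * t)) in *. set (S := sin (2 * PI * t)) in *.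
  clearbody C S. destruct P as [p1 p2]. unfold_pt. simpl in Hv.
  f_equal; (field_simplify_eq;
              [clear - Hv; simpl; nsatz | rewrite HqD; repeat split; intros; lra]).
Qed.

Lemma psi_pt_dist_ratio (P v : pt) : on_S1 v -> in_D P ->
  edist P (psi_pt P v) / edist v P =
  (1 - (fst P ^ 2 + snd P ^ 2)) / ((fst P - fst v) ^ 2 + (snd P - snd v) ^ 2).
Proof.
  intros Hv HP. pose proof (psi_scale_gt_1 P v Hv HP) as Hs.
  pose proof (dist2_pos P v (S1_D_neq v P Hv HP)) as HD.
  assert (Es : psi_scale P v * dotp (vsub P v) (vsub P v) = -2 * dotp v (vsub P v))
    by (unfold psi_scale; field; lra).
  rewrite psi_pt_eq. set (s := psi_scale P v) in *. clearbody s.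
  destruct v as [a b], P as [x y]. unfold edist, on_S1, dotp, vsub in *. cbn [fst snd] in *.
  set (D := (x - a) * (x - a) + (y - b) * (y - b)) in *.
  replace ((x - (a + s * (x - a))) ^ 2 + (y - (b + s * (y - b))) ^ 2) with ((s - 1) ^ 2 * D)
    by (unfold D; ring).
  replace ((a - x) ^ 2 + (b - y) ^ 2) with D by (unfold D; ring).
  replace ((x - a) ^ 2 + (y - b) ^ 2) with D by (unfold D; ring).
  rewrite sqrt_mult, sqrt_pow2 by (try apply pow2_ge_0; lra).
  assert (0 < sqrt D) by (apply sqrt_lt_R0; lra).
  transitivity (s - 1); [field; lra|].
  apply (Rmult_eq_reg_r D); [|lra]. unfold Rdiv. rewrite Rmult_assoc, Rinv_l, Rmult_1_r by lra.
  rewrite Rmult_minus_distr_r, Es. unfold D. nra.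
Qed.

Lemma is_derive_chord_lift (P : pt) (t : R) : in_D P ->
  is_derive (chord_lift P) t (edist P (psi_pt P (piS1 t)) / edist (piS1 t) P).
Proof.
  intros HP. rewrite psi_pt_dist_ratio by (auto; apply piS1_on_S1).
  pose proof (dotp_cross_sq (piS1 t) P (piS1_on_S1 t)) as Hlag.
  destruct P as [p1 p2]. unfold in_D, dotp, cross, vsub, piS1 in *. cbn [fst snd] in *.
  apply (is_derive_ext (fun s => s + / 2 - atan ((cos (2 * PI * s) * p2 - sin (2 * PI * s) * p1)
                          / (1 - (cos (2 * PI * s) * p1 + sin (2 * PI * s) * p2))) / PI));
    [reflexivity|].
  pose proof (sin2_cos2 (2 * PI * t)) as HCS. unfold Rsqr in HCS. pose proof PI_neq0.
  set (C := cos (2 * PI * t)) in *. set (S := sin (2 * PI * t)) in *.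
  assert (Hq : C * p1 + S * p2 < 1).
  { pose proof (Rle_0_sqr (C - p1)); pose proof (Rle_0_sqr (S - p2)). unfold Rsqr in *. nra. }
  assert (HqD : (1 - (C * p1 + S * p2)) ^ 2 + (C * p2 - S * p1) ^ 2 = (p1 - C) ^ 2 + (p2 - S) ^ 2)
    by (rewrite Hlag; ring).
  assert (HD : (p1 - C) ^ 2 + (p2 - S) ^ 2 > 0).
  { rewrite <- HqD. pose proof (pow2_ge_0 (C * p2 - S * p1)).
    assert (0 < (1 - (C * p1 + S * p2)) ^ 2) by (apply pow_lt; lra). lra. }
  auto_derive; [fold C S; lra|]. fold C S.
  field_simplify_eq.
  - clear - HCS. simpl. nsatz.
  - repeat split; try lra.
    all: match goal with |- ?e <> 0 =>
           replace e with ((p1 - C) ^ 2 + (p2 - S) ^ 2) by (rewrite <- HqD; ring) end; lra.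
Qed.

Definition max_chord_tan (n : nat) (A : nat -> pt) (v : pt) : R :=
  Rmax_upto (fun j => chord_tan (A j) v) (n - 1).

Definition polygon_lift (n : nat) (A : nat -> pt) (t : R) : R :=
  t + / 2 - atan (max_chord_tan n A (piS1 t)) / PI.

Lemma polygon_lift_eq_chord_lift (n : nat) (A : nat -> pt) (k : nat) (t : R) : (k < n)%nat ->
  (forall j, (j < n)%nat -> chord_tan (A j) (piS1 t) <= chord_tan (A k) (piS1 t)) ->
  polygon_lift n A t = chord_lift (A k) t.
Proof.
  intros Hk H. unfold polygon_lift, chord_lift, max_chord_tan.
  rewrite (Rmax_upto_eq (fun j => chord_tan (A j) (piS1 t)) (n - 1) k); auto; [lia|].
  intros j Hj. apply H. lia.
Qed.

Lemma chord_tan_piS1_continuous (P : pt) (t : R) : in_D P ->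
  continuous (fun s => chord_tan P (piS1 s)) t.
Proof.
  intros HP. pose proof (dotp_lt_1 _ _ (piS1_on_S1 t) HP) as H.
  apply (@ex_derive_continuous R_AbsRing R_NormedModule).
  unfold chord_tan, dotp, cross, piS1 in *. cbn [fst snd] in *. auto_derive. lra.
Qed.

Lemma polygon_lift_continuous (n : nat) (A : nat -> pt) :
  (forall j, (j < n)%nat -> in_D (A j)) -> (1 <= n)%nat -> continuity (polygon_lift n A).
Proof.
  intros HD Hn t. apply continuity_pt_filterlim. unfold polygon_lift.
  apply (continuous_minus (fun s => s + / 2) (fun s => atan (max_chord_tan n A (piS1 s)) / PI)).
  - apply (continuous_plus (fun s => s) (fun _ => / 2)); [apply continuous_id | apply continuous_const].
  - apply (continuous_mult (fun s => atan (max_chord_tan n A (piS1 s))) (fun _ => / PI));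
      [|apply continuous_const].
    apply continuous_atan_comp, (Rmax_upto_continuous (fun j s => chord_tan (A j) (piS1 s))).
    intros j Hj. apply chord_tan_piS1_continuous, HD. lia.
Qed.

Lemma polygon_lift_is_lift (n : nat) (A : nat -> pt) :
  (forall j, (j < n)%nat -> in_D (A j)) -> (1 <= n)%nat ->
  is_lift (psiU (polygon n A)) (polygon_lift n A).
Proof.
  intros HD Hn. split; [apply polygon_lift_continuous; auto|]. split.
  - unfold polygon_lift. pose proof (atan_bound (max_chord_tan n A (piS1 0))). pose proof PI_RGT_0.
    assert (- / 2 < atan (max_chord_tan n A (piS1 0)) / PI < / 2).
    { split; apply (Rmult_lt_reg_r PI); auto; field_simplify; lra. }
    lra.
  - intros t. set (v := piS1 t).
    destruct (Rmax_upto_attained (fun j => chord_tan (A j) v) (n - 1)) as [k [Hk E]].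
    assert (Hmax : forall j, (j < n)%nat -> chord_tan (A j) v <= chord_tan (A k) v).
    { intros j Hj. rewrite <- E. apply (Rmax_upto_ge (fun j => chord_tan (A j) v)). lia. }
    rewrite (polygon_lift_eq_chord_lift n A k) by (auto; lia).
    rewrite piS1_chord_lift by (apply HD; lia). symmetry.
    apply psiU_polygon_vertex; auto; [apply piS1_on_S1 | lia |].
    intros j Hj. apply left_closed_iff_chord_tan; auto; apply piS1_on_S1 || (apply HD; lia).
Qed.

Lemma cos_2PI_eq_1 (x : R) : -1 < x < 1 -> cos (2 * PI * x) = 1 -> x = 0.
Proof.
  intros Hx Hc. pose proof PI_RGT_0.
  replace (2 * PI * x) with (2 * (PI * x)) in Hc by ring. rewrite cos_2a_sin in Hc.
  assert (Hs : sin (PI * x) = 0) by nra.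
  destruct (Rtotal_order x 0) as [H1|[H1|H1]]; auto; exfalso.
  - assert (0 < sin (PI * - x)) by (apply sin_gt_0; nra).
    replace (PI * - x) with (- (PI * x)) in H0 by ring. rewrite sin_neg in H0. lra.
  - assert (0 < sin (PI * x)) by (apply sin_gt_0; nra). lra.
Qed.

(* Two lifts differ by a continuous integer-valued function that vanishes at [0]. *)
Lemma lift_unique (g : pt -> pt) (L1 L2 : R -> R) : is_lift g L1 -> is_lift g L2 -> L1 = L2.
Proof.
  intros [C1 [B1 E1]] [C2 [B2 E2]].
  assert (Hc : forall t, cos (2 * PI * (L1 t - L2 t)) = 1).
  { intros t. pose proof (E1 t) as e. rewrite <- (E2 t) in e. unfold piS1 in e.
    injection e as ec es.
    replace (2 * PI * (L1 t - L2 t)) with (2 * PI * L1 t - 2 * PI * L2 t) by ring.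
    rewrite cos_minus, ec, es. pose proof (sin2_cos2 (2 * PI * L2 t)). unfold Rsqr in *. lra. }
  assert (Cd : continuity (fun t => L1 t - L2 t)) by (intros x; apply continuity_pt_minus; auto).
  assert (H0 : L1 0 - L2 0 = 0) by (apply cos_2PI_eq_1; [lra | apply Hc]).
  assert (Hhalf : forall t, L1 t - L2 t <> / 2 /\ L1 t - L2 t <> - / 2).
  { intros t. split; intros E; pose proof (Hc t) as Ht; rewrite E in Ht;
      [apply (cos_2PI_eq_1 (/ 2)) in Ht | apply (cos_2PI_eq_1 (- / 2)) in Ht]; lra. }
  apply functional_extensionality. intros t. apply Rminus_diag_uniq.
  apply cos_2PI_eq_1; [|apply Hc].
  destruct (Rlt_or_le (L1 t - L2 t) 1), (Rlt_or_le (-1) (L1 t - L2 t)); try lra; exfalso.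
  - destruct (IVT_gen (fun t => L1 t - L2 t) 0 t (- / 2) Cd) as [x [_ Hx]];
      [rewrite H0; unfold Rmin, Rmax; destruct Rle_dec; lra | apply (proj2 (Hhalf x)), Hx].
  - destruct (IVT_gen (fun t => L1 t - L2 t) 0 t (/ 2) Cd) as [x [_ Hx]];
      [rewrite H0; unfold Rmin, Rmax; destruct Rle_dec; lra | apply (proj1 (Hhalf x)), Hx].
Qed.

(** * Local and one-sided derivatives *)

Lemma ball_R (x e y : R) : ball x e y <-> Rabs (y - x) < e.
Proof. reflexivity. Qed.

Lemma continuous_pos_near (f : R -> R) (t : R) : continuous f t -> 0 < f t ->
  exists d, 0 < d /\ forall h, Rabs h < d -> 0 < f (t + h).
Proof.
  intros Hc Hp. destruct (proj1 (filterlim_locally f (f t)) Hc (mkposreal _ Hp)) as [d Hd].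
  exists d. split; [apply cond_pos|]. intros h Hh.
  assert (Hb : ball t d (t + h)) by (apply ball_R; replace (t + h - t) with h by ring; auto).
  assert (Hf : Rabs (f (t + h) - f t) < f t) by exact (Hd _ Hb).
  apply Rabs_def2 in Hf. lra.
Qed.

Lemma is_derive_loc (F L : R -> R) (t l d : R) : is_derive F t l -> 0 < d ->
  (forall h, Rabs h < d -> L (t + h) = F (t + h)) -> is_derive L t l.
Proof.
  intros HF Hd E. apply (is_derive_ext_loc F); auto.
  exists (mkposreal d Hd). intros s Hs. apply ball_R in Hs.
  replace s with (t + (s - t)) by ring. symmetry. apply E. auto.
Qed.

Lemma diff_quot_within_loc (F L : R -> R) (t l d : R) (side : R -> Prop) :
  is_derive F t l -> 0 < d -> (forall h, side h -> h <> 0) -> L t = F t ->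
  (forall h, side h -> Rabs h < d -> L (t + h) = F (t + h)) ->
  filterlim (fun h => (L (t + h) - L t) / h) (within side (locally 0)) (locally l).
Proof.
  intros HF Hd Hs Ht E. apply is_derive_Reals in HF.
  apply filterlim_locally. intros eps.
  destruct (HF eps (cond_pos eps)) as [d' Hd'].
  exists (mkposreal _ (Rmin_pos _ _ Hd (cond_pos d'))). intros h Hh Hside.
  assert (Hh' : Rabs h < Rmin d d') by (rewrite <- (Rminus_0_r h); exact Hh). clear Hh.
  assert (Hhd : Rabs h < d) by (eapply Rlt_le_trans; [apply Hh' | apply Rmin_l]).
  assert (Hhd' : Rabs h < d') by (eapply Rlt_le_trans; [apply Hh' | apply Rmin_r]).
  apply ball_R. rewrite Ht, (E h Hside Hhd). apply Hd'; auto.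
Qed.

Lemma is_right_derive_loc (F L : R -> R) (t l d : R) : is_derive F t l -> 0 < d ->
  (forall h, 0 <= h < d -> L (t + h) = F (t + h)) -> is_right_derive L t l.
Proof.
  intros HF Hd E. apply (diff_quot_within_loc F L t l d); auto.
  - intros h H. lra.
  - specialize (E 0). rewrite Rplus_0_r in E. apply E. lra.
  - intros h H1 H2. rewrite Rabs_right in H2 by lra. apply E. lra.
Qed.

Lemma is_left_derive_loc (F L : R -> R) (t l d : R) : is_derive F t l -> 0 < d ->
  (forall h, - d < h <= 0 -> L (t + h) = F (t + h)) -> is_left_derive L t l.
Proof.
  intros HF Hd E. apply (diff_quot_within_loc F L t l d); auto.
  - intros h H. lra.
  - specialize (E 0). rewrite Rplus_0_r in E. apply E. lra.
  - intros h H1 H2. rewrite Rabs_left in H2 by lra. apply E. lra.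
Qed.

Definition prv (n k : nat) : nat := match k with O => (n - 1)%nat | S k' => k' end.

Lemma nxt_cases n k : (k < n)%nat ->
  (S k < n /\ nxt n k = S k)%nat \/ (S k = n /\ nxt n k = 0)%nat.
Proof.
  intros Hk. unfold nxt. destruct (Nat.eq_dec (S k) n) as [<-|].
  - right. split; auto. apply Nat.Div0.mod_same.
  - left. split; [lia | apply Nat.mod_small; lia].
Qed.

Lemma nxt_lt n k : (k < n)%nat -> (nxt n k < n)%nat.
Proof. intros Hk. destruct (nxt_cases n k Hk) as [[? ->]|[? ->]]; lia. Qed.

Lemma prv_lt n k : (k < n)%nat -> (prv n k < n)%nat.
Proof. destruct k; simpl; lia. Qed.

Lemma nxt_prv n k : (k < n)%nat -> nxt n (prv n k) = k.
Proof.
  intros Hk. assert (Hp : (prv n k < n)%nat) by (apply prv_lt; auto).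
  destruct (nxt_cases n (prv n k) Hp) as [[? ->]|[? ->]]; destruct k; simpl in *; lia.
Qed.

Lemma prv_nxt n k : (k < n)%nat -> prv n (nxt n k) = k.
Proof. intros Hk. destruct (nxt_cases n k Hk) as [[? ->]|[? ->]]; simpl; lia. Qed.

Lemma neighbours_distinct n k : (3 <= n)%nat -> (k < n)%nat ->
  prv n k <> k /\ nxt n k <> k /\ nxt n k <> prv n k.
Proof. intros Hn Hk. destruct (nxt_cases n k Hk) as [[? ->]|[? ->]]; destruct k; simpl; lia. Qed.

Lemma convex_ccw_left_closed (n : nat) (A : nat -> pt) i j : convex_ccw n A ->
  (i < n)%nat -> (j < n)%nat -> left_closed (A i) (A (nxt n i)) (A j).
Proof.
  intros Hc Hi Hj. unfold left_closed.
  destruct (Nat.eq_dec j i) as [->|]; [right; unfold cross, vsub; cbn [fst snd]; ring|].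
  destruct (Nat.eq_dec j (nxt n i)) as [->|]; [right; unfold cross, vsub; cbn [fst snd]; ring|].
  apply Rle_ge, Rlt_le, Hc; auto.
Qed.

(* [A j - A k] is a nonnegative combination of the two edge vectors at [A k] (Cramer's rule). *)
Lemma polygon_supporting_vertex (n : nat) (A : nat -> pt) (k : nat) (v : pt) :
  (3 <= n)%nat -> convex_ccw n A -> (k < n)%nat ->
  left_closed v (A k) (A (prv n k)) -> left_closed v (A k) (A (nxt n k)) ->
  forall j, (j < n)%nat -> left_closed v (A k) (A j).
Proof.
  intros Hn Hc Hk Hp Hq j Hj.
  set (p := prv n k) in *. set (q := nxt n k) in *.
  destruct (neighbours_distinct n k Hn Hk) as [Npk [Nqk Nqp]]. fold p q in Npk, Nqk, Nqp.
  assert (Hpl : (p < n)%nat) by (apply prv_lt; auto).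
  assert (Hql : (q < n)%nat) by (apply nxt_lt; auto).
  assert (Hpk : nxt n p = k) by (apply nxt_prv; auto).
  assert (Hpq : cross (vsub (A k) (A p)) (vsub (A q) (A p)) > 0)
    by (rewrite <- Hpk at 1; apply Hc; auto; congruence).
  pose proof (convex_ccw_left_closed n A k j Hc Hk Hj) as Hkj. fold q in Hkj.
  pose proof (convex_ccw_left_closed n A p j Hc Hpl Hj) as Hpj. rewrite Hpk in Hpj.
  pose proof (cross_cramer (vsub (A k) v) (vsub (A p) (A k)) (vsub (A q) (A k))
                (vsub (A j) (A k))) as I.
  clearbody p q. unfold left_closed in *.
  destruct (A k) as [x0 y0], (A p) as [x1 y1], (A q) as [x2 y2], (A j) as [x3 y3], v as [a b].
  unfold cross, vsub in *. cbn [fst snd] in *. nra.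
Qed.

(** * Corners seen from the circle *)

Definition lerp (P Q : pt) (s : R) : pt :=
  (fst P + s * (fst Q - fst P), snd P + s * (snd Q - snd P)).

(* [w] lies on the line [PQ] beyond [P] as seen from [Q], and the line enters the disk at [w]. *)
Definition behind (P Q w : pt) : Prop :=
  exists s, s < 0 /\ w = lerp P Q s /\ dotp w (vsub Q P) < 0.

Definition left_strict (v w P : pt) : Prop := cross (vsub w v) (vsub P v) > 0.

Lemma left_strict_closed (v w P : pt) : left_strict v w P -> left_closed v w P.
Proof. unfold left_strict, left_closed. lra. Qed.

Lemma behind_of_closer (P Q w : pt) : in_D P -> in_D Q -> on_S1 w -> on_line P Q w ->
  edist w P < edist w Q -> behind P Q w.
Proof.
  intros HP HQ Hw Hl Hd.
  assert (HPQ : Q <> P) by (intros ->; lra).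
  pose proof (cross_eq0_scal _ _ (dist2_pos Q P HPQ) Hl) as Ew.
  set (s := dotp (vsub Q P) (vsub w P) / dotp (vsub Q P) (vsub Q P)) in Ew. clearbody s.
  pose proof (dist2_pos Q P HPQ) as HE.
  unfold edist in Hd. apply sqrt_lt_0_alt in Hd.
  destruct P as [x y], Q as [x' y'], w as [a b]. unfold lerp. unfold_pt.
  injection Ew as Ea Eb.
  assert (a = x + s * (x' - x)) as -> by lra. assert (b = y + s * (y' - y)) as -> by lra.
  set (e1 := x' - x) in *. set (e2 := y' - y) in *.
  set (E := e1 * e1 + e2 * e2) in *.
  assert (Hs12 : s < / 2).
  { replace (x + s * e1 - x) with (s * e1) in Hd by ring.
    replace (y + s * e2 - y) with (s * e2) in Hd by ring.
    replace (x + s * e1 - x') with ((s - 1) * e1) in Hd by (unfold e1; ring).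
    replace (y + s * e2 - y') with ((s - 1) * e2) in Hd by (unfold e2; ring).
    unfold E in *. nra. }
  (* [|P + s (Q - P)|^2] is a convex function of [s], below [1] at [s = 0] and [s = 1] *)
  assert (Hconv : (1 - s) * (x ^ 2 + y ^ 2) + s * (x' ^ 2 + y' ^ 2)
                  - ((x + s * e1) ^ 2 + (y + s * e2) ^ 2) = s * (1 - s) * E)
    by (unfold E, e1, e2; ring).
  assert (Hs : s < 0).
  { destruct (Rlt_or_le s 0) as [|Hs0]; auto. exfalso.
    assert (0 <= s * (1 - s) * E) by (apply Rmult_le_pos; [apply Rmult_le_pos|]; lra). nra. }
  exists s. split; [auto|]. split; [reflexivity|].
  assert (Hf : x ^ 2 + y ^ 2 - 1 = ((x + s * e1) ^ 2 + (y + s * e2) ^ 2 - 1)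
                 + 2 * ((x + s * e1) * e1 + (y + s * e2) * e2) * (- s) + E * s ^ 2)
    by (unfold E; ring).
  assert (0 < E * s ^ 2) by (apply Rmult_lt_0_compat; [lra | nra]).
  unfold dotp, vsub. cbn [fst snd]. fold e1 e2. nra.
Qed.

Lemma piS1_periodic (a : R) : piS1 (a + 1) = piS1 a.
Proof.
  unfold piS1. replace (2 * PI * (a + 1)) with (2 * PI * a + 2 * PI) by ring.
  rewrite cos_plus, sin_plus, cos_2PI, sin_2PI. f_equal; ring.
Qed.

Lemma sin_PI_pos (h : R) : 0 < h < 1 -> 0 < sin (PI * h).
Proof. intros. pose proof PI_RGT_0. apply sin_gt_0; nra. Qed.

Lemma sin_PI_neg (h : R) : -1 < h < 0 -> sin (PI * h) < 0.
Proof.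
  intros. pose proof (sin_PI_pos (- h) ltac:(lra)).
  replace (PI * - h) with (- (PI * h)) in H0 by ring. rewrite sin_neg in H0. lra.
Qed.

Lemma cross_piS1_chords (a p r : R) :
  cross (vsub (piS1 (a + p)) (piS1 a)) (vsub (piS1 (a + r)) (piS1 a)) =
  -4 * sin (PI * p) * sin (PI * r) * sin (PI * (p - r)).
Proof.
  unfold piS1, cross, vsub; cbn [fst snd].
  replace (2 * PI * (a + p)) with (2 * PI * a + 2 * (PI * p)) by ring.
  replace (2 * PI * (a + r)) with (2 * PI * a + 2 * (PI * r)) by ring.
  replace (PI * (p - r)) with (PI * p - PI * r) by ring.
  rewrite !cos_plus, !sin_plus, !cos_2a_sin, !sin_2a, sin_minus.
  pose proof (sin2_cos2 (2 * PI * a)) as HA. pose proof (sin2_cos2 (PI * p)) as HP.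
  pose proof (sin2_cos2 (PI * r)) as HR. unfold Rsqr in *.
  set (cA := cos (2 * PI * a)) in *. set (sA := sin (2 * PI * a)) in *.
  set (cp := cos (PI * p)) in *. set (sp := sin (PI * p)) in *.
  set (cr := cos (PI * r)) in *. set (sr := sin (PI * r)) in *.
  clearbody cA sA cp sp cr sr. nsatz.
Qed.

Lemma arc_chord_sides (a b t : R) : a < t < b -> b < a + 1 ->
  cross (vsub (piS1 b) (piS1 a)) (vsub (piS1 t) (piS1 a)) < 0 /\
  cross (vsub (piS1 a) (piS1 b)) (vsub (piS1 t) (piS1 b)) > 0.
Proof.
  intros Ht Hb. split.
  - pose proof (cross_piS1_chords a (b - a) (t - a)) as E.
    replace (a + (b - a)) with b in E by ring. replace (a + (t - a)) with t in E by ring.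
    rewrite E.
    pose proof (sin_PI_pos (b - a) ltac:(lra)). pose proof (sin_PI_pos (t - a) ltac:(lra)).
    pose proof (sin_PI_pos (b - a - (t - a)) ltac:(lra)).
    assert (0 < sin (PI * (b - a)) * sin (PI * (t - a)) * sin (PI * (b - a - (t - a))))
      by (repeat apply Rmult_lt_0_compat; auto).
    nra.
  - pose proof (cross_piS1_chords b (a - b) (t - b)) as E.
    replace (b + (a - b)) with a in E by ring. replace (b + (t - b)) with t in E by ring.
    rewrite E.
    pose proof (sin_PI_neg (a - b) ltac:(lra)). pose proof (sin_PI_neg (t - b) ltac:(lra)).
    pose proof (sin_PI_neg (a - b - (t - b)) ltac:(lra)).
    assert (0 < sin (PI * (a - b)) * sin (PI * (t - b))) by nra. nra.
Qed.

Lemma cross_piS1_shift (c : pt) (t h : R) :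
  cross c (vsub (piS1 (t + h)) (piS1 t)) = 2 * sin (PI * h) * dotp c (piS1 (t + h / 2)).
Proof.
  unfold piS1, cross, vsub, dotp; cbn [fst snd].
  replace (2 * PI * (t + h)) with (2 * PI * (t + h / 2) + PI * h) by field.
  replace (2 * PI * t) with (2 * PI * (t + h / 2) - PI * h) by field.
  rewrite cos_plus, sin_plus, cos_minus, sin_minus. ring.
Qed.

Lemma dotp_piS1_continuous (c : pt) (t : R) : continuous (fun s => dotp c (piS1 s)) t.
Proof.
  apply (@ex_derive_continuous R_AbsRing R_NormedModule).
  unfold dotp, piS1; cbn [fst snd]. auto_derive. auto.
Qed.

Lemma cross_piS1_continuous (P Q : pt) (t : R) :
  continuous (fun s => cross (vsub P (piS1 s)) (vsub Q (piS1 s))) t.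
Proof.
  apply (@ex_derive_continuous R_AbsRing R_NormedModule).
  unfold cross, vsub, piS1; cbn [fst snd]. auto_derive. auto.
Qed.

Lemma cross_piS1_sign_near (c : pt) (t : R) : dotp c (piS1 t) > 0 ->
  exists d, 0 < d /\ forall h, Rabs h < d ->
    (0 <= h -> cross c (vsub (piS1 (t + h)) (piS1 t)) >= 0) /\
    (h <= 0 -> cross c (vsub (piS1 (t + h)) (piS1 t)) <= 0).
Proof.
  intros Hc. destruct (continuous_pos_near _ t (dotp_piS1_continuous c t) Hc) as [d [Hd E]].
  exists (Rmin d 1). split; [apply Rmin_pos; lra|]. intros h Hh.
  pose proof (Rmin_l d 1). pose proof (Rmin_r d 1). apply Rabs_def2 in Hh as [Hh1 Hh2].
  assert (Hm : 0 < dotp c (piS1 (t + h / 2))) by (apply E; apply Rabs_def1; lra).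
  rewrite cross_piS1_shift. split; intros Hs.
  - destruct (Req_dec h 0) as [->|]; [rewrite Rmult_0_r, sin_0; lra|].
    pose proof (sin_PI_pos h ltac:(lra)). nra.
  - destruct (Req_dec h 0) as [->|]; [rewrite Rmult_0_r, sin_0; lra|].
    pose proof (sin_PI_neg h ltac:(lra)). nra.
Qed.

Lemma cross_line_shift (v x P Q : pt) :
  cross (vsub P v) (vsub Q v) = cross (vsub Q P) (vsub v x) + cross (vsub P x) (vsub Q x).
Proof. unfold cross, vsub. cbn [fst snd]. ring. Qed.

Ltac pt_ring := unfold lerp, cross, vsub; cbn [fst snd]; ring.

Section Corner.

(* Three consecutive vertices; [x] and [y] play the roles of [u_i] and [u_{i+1}]. *)
Variables Ap P Aq x y : pt.
Hypothesis corner_convex : left_strict Ap P Aq.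
Hypothesis x_behind : behind Ap P x.
Hypothesis y_behind : behind P Aq y.

Lemma corner_at_x : cross (vsub P x) (vsub Ap x) = 0 /\ left_strict x P Aq.
Proof.
  destruct x_behind as [s [Hs [-> _]]]. unfold left_strict in *. split; [pt_ring|].
  replace (cross (vsub P (lerp Ap P s)) (vsub Aq (lerp Ap P s)))
    with ((1 - s) * cross (vsub P Ap) (vsub Aq Ap)) by pt_ring.
  nra.
Qed.

Lemma corner_at_y : cross (vsub P y) (vsub Aq y) = 0 /\ left_strict y P Ap.
Proof.
  destruct y_behind as [s [Hs [-> _]]]. unfold left_strict in *. split; [pt_ring|].
  replace (cross (vsub P (lerp P Aq s)) (vsub Ap (lerp P Aq s)))
    with (- s * cross (vsub P Ap) (vsub Aq Ap)) by pt_ring.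
  nra.
Qed.

Lemma corner_x_neq_y : x <> y.
Proof.
  intros E. destruct corner_at_x as [_ Hx]. destruct corner_at_y as [Hy _].
  unfold left_strict in Hx. rewrite E in Hx. lra.
Qed.

(* Each of the two cross products is compared with the chord [xy] inside the half-plane
   [dotp x _ < 0] (resp. [dotp y _ < 0]), where angular order is transitive. *)
Lemma corner_inside_chord (v : pt) : on_S1 x -> on_S1 y -> on_S1 v ->
  cross (vsub y x) (vsub v x) < 0 -> cross (vsub x y) (vsub v y) > 0 ->
  left_strict v P Ap /\ left_strict v P Aq.
Proof.
  intros Sx Sy Sv C1 C2. unfold left_strict in *.
  destruct x_behind as [s1 [Hs1 [Ex Hdx]]]. destruct y_behind as [s2 [Hs2 [Ey Hdy]]].
  assert (Nvx : v <> x) by (intros ->; unfold cross, vsub in C1; cbn [fst snd] in C1; nra).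
  assert (Nvy : v <> y) by (intros ->; unfold cross, vsub in C2; cbn [fst snd] in C2; nra).
  pose proof corner_x_neq_y as Nxy.
  split.
  - rewrite (cross_line_shift v x), (proj1 corner_at_x), Rplus_0_r.
    replace (cross (vsub Ap P) (vsub v x)) with (cross (vsub v x) (vsub P Ap)) by pt_ring.
    apply (half_plane_cross_trans x _ (vsub y x)); auto using chord_dotp_neg.
    + rewrite cross_anti. lra.
    + rewrite Ex, Ey.
      replace (cross (vsub (lerp P Aq s2) (lerp Ap P s1)) (vsub P Ap))
        with (- s2 * cross (vsub P Ap) (vsub Aq Ap)) by pt_ring.
      nra.
  - rewrite (cross_line_shift v y), (proj1 corner_at_y), Rplus_0_r.
    apply (half_plane_cross_trans y _ (vsub x y)); auto using chord_dotp_neg.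
    rewrite Ex, Ey.
    replace (cross (vsub Aq P) (vsub (lerp Ap P s1) (lerp P Aq s2)))
      with ((1 - s1) * cross (vsub P Ap) (vsub Aq Ap)) by pt_ring.
    nra.
Qed.

Lemma corner_arc (a b t : R) : piS1 a = x -> piS1 b = y -> a < b <= a + 1 -> a < t < b ->
  left_strict (piS1 t) P Ap /\ left_strict (piS1 t) P Aq.
Proof.
  intros Ha Hb Hab Ht.
  assert (Hb1 : b < a + 1).
  { destruct Hab as [_ [|Heq]]; auto. exfalso. apply corner_x_neq_y.
    rewrite <- Ha, <- Hb, Heq. symmetry. apply piS1_periodic. }
  destruct (arc_chord_sides a b t Ht Hb1) as [C1 C2]. rewrite Ha, Hb in C1, C2.
  apply corner_inside_chord; auto; [rewrite <- Ha | rewrite <- Hb | idtac]; apply piS1_on_S1.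
Qed.

Lemma corner_right_of_x (t : R) : piS1 t = x ->
  exists d, 0 < d /\ forall h, 0 <= h < d ->
    left_closed (piS1 (t + h)) P Ap /\ left_closed (piS1 (t + h)) P Aq.
Proof.
  intros Ht. destruct corner_at_x as [H0 Hq].
  destruct x_behind as [s [Hs [_ Hdx]]].
  assert (Hc : dotp (vsub Ap P) (piS1 t) > 0)
    by (rewrite Ht; destruct x; unfold dotp, vsub in *; cbn [fst snd] in *; lra).
  destruct (cross_piS1_sign_near _ t Hc) as [d1 [Hd1 E1]].
  unfold left_strict in Hq. rewrite <- Ht in Hq.
  destruct (continuous_pos_near _ t (cross_piS1_continuous P Aq t) Hq) as [d2 [Hd2 E2]].
  exists (Rmin d1 d2). split; [apply Rmin_pos; auto|]. intros h Hh.
  pose proof (Rmin_l d1 d2). pose proof (Rmin_r d1 d2).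
  assert (Habs : Rabs h < d1 /\ Rabs h < d2) by (rewrite Rabs_right by lra; lra).
  unfold left_closed. split.
  - pose proof (proj1 (E1 h (proj1 Habs)) (proj1 Hh)) as Hpos.
    rewrite (cross_line_shift _ x), H0, <- Ht. lra.
  - left. apply E2, Habs.
Qed.

Lemma corner_left_of_y (t : R) : piS1 t = y ->
  exists d, 0 < d /\ forall h, - d < h <= 0 ->
    left_closed (piS1 (t + h)) P Ap /\ left_closed (piS1 (t + h)) P Aq.
Proof.
  intros Ht. destruct corner_at_y as [H0 Hp].
  destruct y_behind as [s [Hs [_ Hdy]]].
  assert (Hc : dotp (vsub P Aq) (piS1 t) > 0)
    by (rewrite Ht; destruct y; unfold dotp, vsub in *; cbn [fst snd] in *; lra).
  destruct (cross_piS1_sign_near _ t Hc) as [d1 [Hd1 E1]].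
  unfold left_strict in Hp. rewrite <- Ht in Hp.
  destruct (continuous_pos_near _ t (cross_piS1_continuous P Ap t) Hp) as [d2 [Hd2 E2]].
  exists (Rmin d1 d2). split; [apply Rmin_pos; auto|]. intros h Hh.
  pose proof (Rmin_l d1 d2). pose proof (Rmin_r d1 d2).
  assert (Habs : Rabs h < d1 /\ Rabs h < d2) by (rewrite Rabs_left1 by lra; lra).
  unfold left_closed. split.
  - left. apply E2, Habs.
  - pose proof (proj2 (E1 h (proj1 Habs)) (proj2 Hh)) as Hneg.
    rewrite (cross_line_shift _ y), H0, <- Ht.
    replace (cross (vsub Aq P) (vsub (piS1 (t + h)) (piS1 t)))
      with (- cross (vsub P Aq) (vsub (piS1 (t + h)) (piS1 t))) by pt_ring.
    lra.
Qed.

End Corner.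

Section Polygon.

Variables (n : nat) (A u : nat -> pt).
Hypothesis n_ge_3 : (3 <= n)%nat.
Hypothesis A_in_D : forall i, (i < n)%nat -> in_D (A i).
Hypothesis A_convex : convex_ccw n A.
Hypothesis u_spec : forall i, (i < n)%nat -> is_u n A i (u i).

Lemma psiU_polygon_supported (k : nat) (v : pt) : (k < n)%nat -> on_S1 v ->
  left_closed v (A k) (A (prv n k)) -> left_closed v (A k) (A (nxt n k)) ->
  psiU (polygon n A) v = psi_pt (A k) v.
Proof.
  intros Hk Hv Hp Hq. apply psiU_polygon_vertex; auto; [lia|].
  apply (polygon_supporting_vertex n); auto.
Qed.

Lemma polygon_lift_supported (k : nat) (s : R) : (k < n)%nat ->
  left_closed (piS1 s) (A k) (A (prv n k)) -> left_closed (piS1 s) (A k) (A (nxt n k)) ->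
  polygon_lift n A s = chord_lift (A k) s.
Proof.
  intros Hk Hp Hq. apply polygon_lift_eq_chord_lift; auto. intros j Hj.
  apply left_closed_iff_chord_tan; auto using piS1_on_S1.
  apply (polygon_supporting_vertex n); auto.
Qed.

Lemma polygon_corner (i : nat) : (i < n)%nat ->
  left_strict (A i) (A (nxt n i)) (A (nxt n (nxt n i))).
Proof.
  intros Hi. assert (Hk : (nxt n i < n)%nat) by (apply nxt_lt; auto).
  destruct (neighbours_distinct n (nxt n i) n_ge_3 Hk) as [_ [Nq Nqp]].
  rewrite prv_nxt in Nqp by auto.
  apply A_convex; auto using nxt_lt.
Qed.

Lemma u_behind (i : nat) : (i < n)%nat -> behind (A i) (A (nxt n i)) (u i).
Proof.
  intros Hi. destruct (u_spec i Hi) as [Hs [Hl Hd]].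
  apply behind_of_closer; auto using nxt_lt.
Qed.

Lemma psiU_polygon_arc (i : nat) (v : pt) : (i < n)%nat -> arc_co (u i) (u (nxt n i)) v ->
  psiU (polygon n A) v = psi_pt (A (nxt n i)) v.
Proof.
  intros Hi [a [b [t [Ha [Hb [Hab [<- Ht]]]]]]].
  assert (Hk : (nxt n i < n)%nat) by (apply nxt_lt; auto).
  pose proof (polygon_corner i Hi) as Hc.
  pose proof (u_behind i Hi) as Hx. pose proof (u_behind (nxt n i) Hk) as Hy.
  apply psiU_polygon_supported; auto using piS1_on_S1; rewrite ?prv_nxt by auto.
  - destruct (Req_dec t a) as [->|].
    + rewrite Ha. unfold left_closed. right. apply (corner_at_x _ _ _ _ Hc Hx).
    + apply left_strict_closed, (corner_arc _ _ _ _ _ Hc Hx Hy a b); auto; lra.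
  - destruct (Req_dec t a) as [->|].
    + rewrite Ha. apply left_strict_closed, (corner_at_x _ _ _ _ Hc Hx).
    + apply left_strict_closed, (corner_arc _ _ _ _ _ Hc Hx Hy a b); auto; lra.
Qed.

Lemma polygon_lift_derive_arc (i : nat) (v : pt) (t : R) : (i < n)%nat ->
  arc_oo (u i) (u (nxt n i)) v -> piS1 t = v ->
  is_derive (polygon_lift n A) t
    (edist (A (nxt n i)) (psi_pt (A (nxt n i)) v) / edist v (A (nxt n i))).
Proof.
  intros Hi [a [b [t' [Ha [Hb [Hab [Hv Ht']]]]]]] <-.
  assert (Hk : (nxt n i < n)%nat) by (apply nxt_lt; auto).
  destruct (corner_arc _ _ _ _ _ (polygon_corner i Hi) (u_behind i Hi) (u_behind _ Hk) a b t')
    as [Gp Gq]; auto.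
  rewrite Hv in Gp, Gq. unfold left_strict in Gp, Gq.
  destruct (continuous_pos_near _ t (cross_piS1_continuous _ _ t) Gp) as [d1 [Hd1 E1]].
  destruct (continuous_pos_near _ t (cross_piS1_continuous _ _ t) Gq) as [d2 [Hd2 E2]].
  apply (is_derive_loc (chord_lift (A (nxt n i))) _ t _ (Rmin d1 d2));
    [apply is_derive_chord_lift; auto | apply Rmin_pos; auto |].
  intros h Hh. pose proof (Rmin_l d1 d2). pose proof (Rmin_r d1 d2).
  apply polygon_lift_supported; auto; rewrite ?prv_nxt by auto;
    apply left_strict_closed; [apply E1 | apply E2]; lra.
Qed.

Lemma polygon_lift_right_derive_u (i : nat) (t : R) : (i < n)%nat -> piS1 t = u i ->
  is_right_derive (polygon_lift n A) t
    (edist (A (nxt n i)) (psi_pt (A (nxt n i)) (u i)) / edist (u i) (A (nxt n i))).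
Proof.
  intros Hi Ht. assert (Hk : (nxt n i < n)%nat) by (apply nxt_lt; auto).
  destruct (corner_right_of_x _ _ _ _ (polygon_corner i Hi) (u_behind i Hi) t Ht)
    as [d [Hd E]].
  rewrite <- Ht. apply (is_right_derive_loc (chord_lift (A (nxt n i))) _ t _ d);
    [apply is_derive_chord_lift; auto | auto |].
  intros h Hh. destruct (E h Hh). apply polygon_lift_supported; rewrite ?prv_nxt; auto.
Qed.

Lemma polygon_lift_left_derive_u (i : nat) (t : R) : (i < n)%nat -> piS1 t = u i ->
  is_left_derive (polygon_lift n A) t (edist (A i) (psi_pt (A i) (u i)) / edist (u i) (A i)).
Proof.
  intros Hi Ht. assert (Hp : (prv n i < n)%nat) by (apply prv_lt; auto).
  pose proof (polygon_corner (prv n i) Hp) as Hc. rewrite nxt_prv in Hc by auto.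
  destruct (corner_left_of_y _ _ _ _ Hc (u_behind i Hi) t Ht) as [d [Hd E]].
  rewrite <- Ht. apply (is_left_derive_loc (chord_lift (A i)) _ t _ d);
    [apply is_derive_chord_lift; auto | auto |].
  intros h Hh. destruct (E h Hh). apply polygon_lift_supported; auto.
Qed.

End Polygon.

Theorem proposition2p4 (n : nat) (A : nat -> pt) (u : nat -> pt) :
  (3 <= n)%nat ->
  (forall i, (i < n)%nat -> in_D (A i)) ->
  convex_ccw n A ->
  (forall i, (i < n)%nat -> is_u n A i (u i)) ->
  let B := polygon n A in
  (exists L, is_lift (psiU B) L) /\
  forall i, (i < n)%nat ->
    let Ai := A i in
    let Ai1 := A (nxt n i) in
    let ui := u i in
    let ui1 := u (nxt n i) in
    (* (1) *)
    (forall v, arc_co ui ui1 v -> psiU B v = psi_pt Ai1 v) /\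
    (* (2) *)
    (forall L, is_lift (psiU B) L ->
       forall v t, arc_oo ui ui1 v -> piS1 t = v ->
         is_derive L t (edist Ai1 (psi_pt Ai1 v) / edist v Ai1)) /\
    (* (3) *)
    (forall L, is_lift (psiU B) L ->
       forall t, piS1 t = ui ->
         is_right_derive L t (edist Ai1 (psi_pt Ai1 ui) / edist ui Ai1) /\
         is_left_derive L t (edist Ai (psi_pt Ai ui) / edist ui Ai)).
Proof.
  intros Hn HD Hc Hu. cbv zeta.
  assert (Hlift : is_lift (psiU (polygon n A)) (polygon_lift n A))
    by (apply polygon_lift_is_lift; auto; lia).
  split; [exists (polygon_lift n A); exact Hlift|].
  intros i Hi. split; [|split].
  - intros v Hv. apply (psiU_polygon_arc n A u); auto.
  - intros L HL v t Hv Ht. rewrite (lift_unique _ _ _ HL Hlift).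
    apply (polygon_lift_derive_arc n A u); auto.
  - intros L HL t Ht. rewrite (lift_unique _ _ _ HL Hlift). split.
    + apply (polygon_lift_right_derive_u n A u); auto.
    + apply (polygon_lift_left_derive_u n A u); auto.
Qed.
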